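(* Let $p$ be an even positive integer, $0\le\alpha\le1$, and for positive integers $j$ define $$g(j)=\prod_{i=1}^j\frac{i+\alpha}{i+1}\cdot\frac{p-i}{p-i-1+\alpha}.$$ Then $g(j)\simeq\left(\frac{1}{j+1}\right)^{1-\alpha}$ for all $1\le j\le p/2-1$.
   Context: $f\simeq h$ means there are constants $c_1,c_2>0$, not depending on $p$ or $j$, with $c_1h\le f\le c_2h$. *)

From HB Require Import structures.
From mathcomp Require Import all_boot all_order all_algebra.
From mathcomp Require Import all_classical all_reals all_analysis.
Set Implicit Arguments. Unset Strict Implicit. Unset Printing Implicit Defensive.
Import Order.TTheory GRing.Theory Num.Theory.
Local Open Scope ring_scope.

Definition gC2 {R : realType} (p : nat) (a : R) (j : nat) : R :=
  \prod_(1 <= i < j.+1)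
    ((i%:R + a) / (i.+1)%:R * ((p%:R - i%:R) / (p%:R - i%:R - 1 + a))).

(** Split [g(j)] into [P(j) = prod (i+a)/(i+1)] and [Q(j) = prod (p-i)/(p-i-1+a)].
    With [t = 1 - a], Bernoulli's inequality [y^t <= 1 - t + t y] traps each factor
    of [P] between two telescoping ratios of powers,
    [(i/(i+1))^t <= (i+a)/(i+1) <= ((i+a)/(i+1+a))^t], whose products are
    [(j+1)^-t] and [((1+a)/(j+1+a))^t <= 2 (j+1)^-t].  Each factor of [Q] lies
    between [1] and [(p-i)/(p-i-1)], and the latter telescopes to
    [(p-1)/(p-1-j) <= 2] as long as [j < p/2]. *)
From HB Require Import structures.
From mathcomp Require Import all_boot all_order all_algebra.
From mathcomp Require Import all_classical all_reals all_analysis.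
From mathcomp Require Import zify ring lra.
Import Order.TTheory GRing.Theory Num.Theory.
Local Open Scope ring_scope.

Section Telescoping.
Context {R : realFieldType}.

Lemma prodf_div_telescope (g : nat -> R) m n : (m <= n)%N ->
    (forall k, (m <= k <= n)%N -> g k != 0) ->
  \prod_(m <= k < n) (g k / g k.+1) = g m / g n.
Proof.
rewrite leq_eqVlt => /predU1P[<- gm0|ltmn g0].
  by rewrite big_geq // divff // gm0 ?leqnn.
have -> : g m / g n = (g n)^-1 / (g m)^-1 by rewrite invrK mulrC.
apply: (@telescope_prodf_eq _ _ _ (fun k => (g k)^-1)) => // [k /andP[ltmk ltkn]|k _].
  by rewrite invr_eq0 g0 // (ltnW ltmk) (ltnW ltkn).
by rewrite invrK mulrC.
Qed.

Lemma prod_le_telescope (u g : nat -> R) m n : (m <= n)%N ->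
    (forall k, (m <= k <= n)%N -> 0 < g k) ->
    (forall k, (m <= k < n)%N -> 0 <= u k <= g k / g k.+1) ->
  \prod_(m <= k < n) u k <= g m / g n.
Proof.
move=> lemn g_gt0 ule; rewrite -prodf_div_telescope // => [|k /g_gt0/lt0r_neq0//].
by rewrite big_nat [leRHS]big_nat; apply: ler_prod => k /ule.
Qed.

Lemma telescope_le_prod (u g : nat -> R) m n : (m <= n)%N ->
    (forall k, (m <= k <= n)%N -> 0 < g k) ->
    (forall k, (m <= k < n)%N -> g k / g k.+1 <= u k) ->
  g m / g n <= \prod_(m <= k < n) u k.
Proof.
move=> lemn g_gt0 gle; rewrite -prodf_div_telescope // => [|k /g_gt0/lt0r_neq0//].
rewrite big_nat [leRHS]big_nat; apply: ler_prod => k /andP[lemk ltkn].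
have [gk_gt0 gk1_gt0] : 0 < g k /\ 0 < g k.+1.
  by rewrite !g_gt0 ?lemk ?(ltnW ltkn) ?(leqW lemk).
by rewrite gle ?lemk // divr_ge0 // ltW.
Qed.

End Telescoping.

Section Ratios.
Context {R : realType}.
Implicit Types (a t x y : R) (p j : nat).

Lemma powR_le_affine y t : 0 < y -> 0 <= t <= 1 -> y `^ t <= 1 - t + t * y.
Proof.
move=> y0 /andP[t0 t1]; have affine_gt0 : 0 < 1 - t + t * y by nra.
have := @concave_ln R (Itv01 t0 t1) y 1 y0 ltr01.
rewrite !convRE /= ln1 mulr0 addr0 mulr1 -ln_powR addrC.
by rewrite ler_ln ?posrE ?powR_gt0.
Qed.

Lemma powR_div x y t : 0 <= x -> 0 < y -> (x / y) `^ t = x `^ t / y `^ t.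
Proof.
move=> x0 y0; rewrite -[in RHS](divfK (lt0r_neq0 y0) x).
by rewrite [in RHS]powRM ?divr_ge0 ?(ltW y0) // mulfK // powR_eq0 gt_eqF.
Qed.

Definition pochhammer_ratio a j := \prod_(1 <= i < j.+1) ((i%:R + a) / i.+1%:R).

Definition reflected_ratio p a j :=
  \prod_(1 <= i < j.+1) ((p%:R - i%:R) / (p%:R - i%:R - 1 + a)).

Lemma gC2_split p a j : gC2 p a j = pochhammer_ratio a j * reflected_ratio p a j.
Proof. exact: big_split. Qed.

Lemma pochhammer_ratio_ge a j : 0 <= a <= 1 ->
  (j.+1%:R^-1) `^ (1 - a) <= pochhammer_ratio a j.
Proof.
move=> /andP[a_ge0 a_le1]; have t01 : 0 <= 1 - a <= 1 by apply/andP; split; lra.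
rewrite -div1r powR_div ?ler01 ?ltr0n //.
rewrite /pochhammer_ratio -[1 `^ _]/(1%:R `^ (1 - a)).
apply: (telescope_le_prod _ (fun k => k%:R `^ (1 - a))) => //.
  by move=> k /andP[k1 _]; rewrite powR_gt0 ?ltr0n.
move=> k /andP[k1 _].
have k0 : 0 < k%:R :> R by rewrite ltr0n.
rewrite -powR_div ?(ltW k0) // -natr1.
have -> : (k%:R + a) / (k%:R + 1) = 1 - (1 - a) + (1 - a) * (k%:R / (k%:R + 1)).
  by field; lra.
by apply: powR_le_affine; rewrite ?divr_gt0 //; lra.
Qed.

Lemma pochhammer_ratio_le a j : 0 <= a <= 1 ->
  pochhammer_ratio a j <= 2 * (j.+1%:R^-1) `^ (1 - a).
Proof.
move=> /andP[a_ge0 a_le1]; have t01 : 0 <= 1 - a <= 1 by apply/andP; split; lra.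
have ka_gt0 k : (0 < k)%N -> 0 < k%:R + a by rewrite -(ltr0n R) => k_gt0; lra.
pose g k := (k%:R + a) `^ (1 - a).
have g_gt0 k : (0 < k)%N -> 0 < g k by move=> k_gt0; rewrite powR_gt0 ?ka_gt0.
have P_le : pochhammer_ratio a j <= g 1 / g j.+1.
  apply: prod_le_telescope => // [k /andP[/g_gt0//]|k /andP[k1 _]].
  have ka := ka_gt0 _ k1; have k1a := ka_gt0 _ (ltn0Sn k).
  have y_le : ((k.+1%:R + a) / (k%:R + a)) `^ (1 - a) <= k.+1%:R / (k%:R + a).
    have -> : k.+1%:R / (k%:R + a) =
              1 - (1 - a) + (1 - a) * ((k.+1%:R + a) / (k%:R + a)) :> R.
      by rewrite -natr1; field; lra.
    by apply: powR_le_affine; rewrite ?divr_gt0.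
  rewrite divr_ge0 ?(ltW ka) ?ler0n //=.
  rewrite -(invf_div k.+1%:R) -(invf_div (g k.+1)) lef_pV2 ?posrE ?divr_gt0 ?g_gt0 //.
  by rewrite /g -powR_div ?(ltW k1a).
apply: le_trans P_le _.
rewrite -[j.+1%:R^-1]div1r powR_div ?ler01 ?ltr0n // powR1 /=.
apply: ler_pM; rewrite ?invr_ge0 ?(ltW (g_gt0 _ _)) //.
  by apply: le_trans (ler1_powR _ _) _; lra.
rewrite div1r lef_pV2 ?posrE ?powR_gt0 ?ka_gt0 ?ltr0n //.
have ja := ka_gt0 _ (ltn0Sn j).
by apply: ge0_ler_powR; rewrite ?nnegrE ?ler0n ?lerDl //; lra.
Qed.

Lemma reflected_ratio_ge1 p a j : 0 <= a <= 1 -> (j.+1 < p)%N ->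
  1 <= reflected_ratio p a j.
Proof.
move=> /andP[a_ge0 a_le1] ltjp; rewrite /reflected_ratio big_nat.
apply: (big_ind (fun x => 1 <= x)) => [//|x y|k /andP[_ ltkj]]; first exact: mulr_ege1.
have : (k.+1 < p)%N by lia.
rewrite -(ltr_nat R) -natr1 => ltkp.
by rewrite ler_pdivlMr ?mul1r; lra.
Qed.

Lemma reflected_ratio_le p a j : 0 <= a -> (j.+1 < p)%N ->
  reflected_ratio p a j <= (p%:R - 1) / (p%:R - j.+1%:R).
Proof.
move=> a_ge0 ltjp; have lt_p k : (k <= j.+1)%N -> k%:R < p%:R :> R.
  by move=> lekj; rewrite ltr_nat; lia.
rewrite /reflected_ratio.
apply: (prod_le_telescope _ (fun k => p%:R - k%:R)) => //.
  by move=> k /andP[_ /lt_p]; lra.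
move=> k /andP[_ ltkj] /=.
have := lt_p k.+1 ltkj; rewrite -!natr1 => ltkp.
by rewrite divr_ge0 ?ler_wpM2l ?lef_pV2 ?posrE //=; lra.
Qed.

Lemma reflected_ratio_le2 p a j : 0 <= a -> (2 * j.+1 <= p)%N ->
  reflected_ratio p a j <= 2.
Proof.
move=> a_ge0 lejp; apply: le_trans (reflected_ratio_le p a j a_ge0 _) _; first lia.
have : (2 * j.+1)%:R <= p%:R :> R by rewrite ler_nat.
have j_ge0 : 0 <= j%:R :> R := ler0n _ _.
by rewrite natrM -!natr1 => lejp'; rewrite ler_pdivrMr; lra.
Qed.

End Ratios.

Theorem lemmaC2 (R : realType) (a : R) (ha0 : 0 <= a) (ha1 : a <= 1) :
  exists c1 c2 : R, 0 < c1 /\ 0 < c2 /\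
    forall p j : nat, (0 < p)%N -> ~~ odd p -> (1 <= j)%N -> (j <= p./2 - 1)%N ->
      c1 * ((j.+1)%:R^-1 `^ (1 - a)) <= gC2 p a j /\
      gC2 p a j <= c2 * ((j.+1)%:R^-1 `^ (1 - a)).
Proof.
exists 1, 4; do 2!split=> //; move=> p j _ p_even j_ge1 j_le.
have lejp : (2 * j.+1 <= p)%N.
  by move: (odd_double_half p); rewrite (negbTE p_even) add0n -mul2n; lia.
have ltjp : (j.+1 < p)%N by lia.
have a01 : 0 <= a <= 1 by apply/andP.
have P_lb := pochhammer_ratio_ge a j a01.
have P_ub := pochhammer_ratio_le a j a01.
have Q_lb := reflected_ratio_ge1 p a j a01 ltjp.
have Q_ub := reflected_ratio_le2 p a j ha0 lejp.
have e_ge0 : 0 <= (j.+1%:R^-1) `^ (1 - a) :> R by exact: powR_ge0.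
have P_ge0 := le_trans e_ge0 P_lb.
have Q_ge0 := le_trans ler01 Q_lb.
rewrite gC2_split mul1r; split.
  by rewrite -[leLHS]mulr1; apply: ler_pM.
apply: le_trans (ler_pM P_ge0 Q_ge0 P_ub Q_ub) _; lra.
Qed.
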